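(* A fractional linear transformation $T$ of $\widehat{\mathbb H}$ satisfies $T(0)=0$, $T(1)=1$ and $T(\infty)=\infty$ if and only if there is $a\in\mathbb H^\times$ with $T(q)=aqa^{-1}$ for all $q$.
   Context: $\mathbb H$ denotes the quaternions, $\mathbb H^\times=\mathbb H\setminus\{0\}$, $\widehat{\mathbb H}=\mathbb H\cup\{\infty\}$. A fractional linear transformation of $\widehat{\mathbb H}$ is a map $q\mapsto(aq+b)(cq+d)^{-1}$ with $\begin{pmatrix}a&b\\c&d\end{pmatrix}\in GL(2,\mathbb H)$. *)

From HB Require Import structures.
From mathcomp Require Import all_boot all_order all_algebra.
From mathcomp Require Import reals.
Set Implicit Arguments. Unset Strict Implicit. Unset Printing Implicit Defensive.
Import Order.TTheory GRing.Theory Num.Theory.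
Local Open Scope ring_scope.

(* The real quaternions  x0 + x1 i + x2 j + x3 k  with i^2=j^2=k^2=ijk=-1. *)
Record quat (R : realType) := Quat { q0 : R; q1 : R; q2 : R; q3 : R }.
Arguments Quat {R}.

Definition quat_to4 (R : realType) (q : quat R) : R * R * R * R :=
  (q0 q, q1 q, q2 q, q3 q).
Definition quat_of4 (R : realType) (x : R * R * R * R) : quat R :=
  let: (a, b, c, d) := x in Quat a b c d.
Lemma quat_to4K (R : realType) : cancel (@quat_to4 R) (@quat_of4 R).
Proof. by case. Qed.
HB.instance Definition _ (R : realType) :=
  Equality.copy (quat R) (can_type (@quat_to4K R)).

Section QuatOps.
Variable R : realType.
Implicit Types p q : quat R.

Definition qzero : quat R := Quat 0 0 0 0.
Definition qone  : quat R := Quat 1 0 0 0.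
Definition qadd p q : quat R :=
  Quat (q0 p + q0 q) (q1 p + q1 q) (q2 p + q2 q) (q3 p + q3 q).
Definition qmul p q : quat R :=
  Quat (q0 p * q0 q - q1 p * q1 q - q2 p * q2 q - q3 p * q3 q)
       (q0 p * q1 q + q1 p * q0 q + q2 p * q3 q - q3 p * q2 q)
       (q0 p * q2 q - q1 p * q3 q + q2 p * q0 q + q3 p * q1 q)
       (q0 p * q3 q + q1 p * q2 q - q2 p * q1 q + q3 p * q0 q).
Definition qnorm2 p : R := q0 p ^+ 2 + q1 p ^+ 2 + q2 p ^+ 2 + q3 p ^+ 2.
(* multiplicative inverse  conj(p)/|p|^2  (only meaningful for p <> 0) *)
Definition qinv p : quat R :=
  let n := qnorm2 p in
  Quat (q0 p / n) (- q1 p / n) (- q2 p / n) (- q3 p / n).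
End QuatOps.

(* The extended quaternions  \hat H = H ∪ {∞}:  Some q = q,  None = ∞. *)
Definition hatH (R : realType) := option (quat R).

(* Quaternionic 2x2 matrices [[a, b], [c, d]] are given by their four entries.
   The matrix lies in GL(2,H) iff it has a two-sided inverse. *)
Definition mat2_mul (R : realType) (M N : quat R * quat R * quat R * quat R)
  : quat R * quat R * quat R * quat R :=
  let: (a, b, c, d) := M in let: (a', b', c', d') := N in
  (qadd (qmul a a') (qmul b c'), qadd (qmul a b') (qmul b d'),
   qadd (qmul c a') (qmul d c'), qadd (qmul c b') (qmul d d')).

Definition mat2_id (R : realType) : quat R * quat R * quat R * quat R :=
  (qone R, qzero R, qzero R, qone R).

Definition inGL2 (R : realType) (a b c d : quat R) : Prop :=
  exists N, mat2_mul (a, b, c, d) N = mat2_id R /\ mat2_mul N (a, b, c, d) = mat2_id R.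

(* The map q |-> (aq+b)(cq+d)^{-1} on \hat H, with the usual conventions:
   value ∞ where cq+d = 0, and ∞ |-> a c^{-1} if c <> 0, ∞ |-> ∞ if c = 0. *)
Definition flt_map (R : realType) (a b c d : quat R) (x : hatH R) : hatH R :=
  match x with
  | Some q =>
      let den := qadd (qmul c q) d in
      if den == qzero R :> quat R then None
      else Some (qmul (qadd (qmul a q) b) (qinv den))
  | None => if c == qzero R then None else Some (qmul a (qinv c))
  end.

Definition is_flt (R : realType) (T : hatH R -> hatH R) : Prop :=
  exists a b c d : quat R, inGL2 a b c d /\ forall x, T x = flt_map a b c d x.

(** Fixing [∞] forces [c = 0], so [T] is the affine map [q ↦ (a q + b) d⁻¹] with
    [d ≠ 0]; fixing [0] then gives [b = 0] and fixing [1] gives [a = d], i.e.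
    [T] is conjugation by [d]. *)
From mathcomp Require Import all_boot all_order all_algebra.
From mathcomp Require Import reals.
From mathcomp Require Import ring.
Import Order.TTheory GRing.Theory Num.Theory.
Local Open Scope ring_scope.
Set Implicit Arguments. Unset Strict Implicit.

Section QuatAlgebra.
Variable R : realType.
Implicit Types p q r : quat R.

Lemma qnorm2_eq0 q : (qnorm2 q == 0) = (q == qzero R).
Proof.
case: q => x0 x1 x2 x3; rewrite /qnorm2 /=.
rewrite !paddr_eq0 ?addr_ge0 ?sqr_ge0 // !sqrf_eq0.
apply/idP/eqP => [/andP [/andP [/andP [/eqP-> /eqP->] /eqP->] /eqP->] //|].
by case=> -> -> -> ->; rewrite !eqxx.
Qed.

Lemma qmulV q : q != qzero R -> qmul q (qinv q) = qone R.
Proof.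
rewrite -qnorm2_eq0; case: q => x0 x1 x2 x3 nz_n.
by rewrite /qinv /qmul /qone /qnorm2 /=; congr Quat; field.
Qed.

Lemma qmulVr q : q != qzero R -> qmul (qinv q) q = qone R.
Proof.
rewrite -qnorm2_eq0; case: q => x0 x1 x2 x3 nz_n.
by rewrite /qinv /qmul /qone /qnorm2 /=; congr Quat; field.
Qed.

Lemma qmulA p q r : qmul p (qmul q r) = qmul (qmul p q) r.
Proof. by case: p q r => [? ? ? ?] [? ? ? ?] [? ? ? ?]; rewrite /qmul /=; congr Quat; ring. Qed.

Lemma qmul1r q : qmul (qone R) q = q.
Proof. by case: q => *; rewrite /qmul /=; congr Quat; ring. Qed.

Lemma qmulr1 q : qmul q (qone R) = q.
Proof. by case: q => *; rewrite /qmul /=; congr Quat; ring. Qed.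

Lemma qmul0r q : qmul (qzero R) q = qzero R.
Proof. by case: q => *; rewrite /qmul /=; congr Quat; ring. Qed.

Lemma qmulr0 q : qmul q (qzero R) = qzero R.
Proof. by case: q => *; rewrite /qmul /=; congr Quat; ring. Qed.

Lemma qadd0r q : qadd (qzero R) q = q.
Proof. by case: q => *; rewrite /qadd /=; congr Quat; ring. Qed.

Lemma qaddr0 q : qadd q (qzero R) = q.
Proof. by case: q => *; rewrite /qadd /=; congr Quat; ring. Qed.

Lemma qdivrK q p : q != qzero R -> qmul (qmul p (qinv q)) q = p.
Proof. by move=> nz_q; rewrite -qmulA qmulVr // qmulr1. Qed.

End QuatAlgebra.

Section FractionalLinear.
Variable R : realType.
Implicit Types a b c d q r : quat R.

Lemma flt_map_None_eq a b c d :
  (flt_map a b c d None == None) = (c == qzero R).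
Proof. by rewrite /=; case: ifP. Qed.

Lemma flt_map_affine_Some a b d q r :
  flt_map a b (qzero R) d (Some q) = Some r ->
  d != qzero R /\ qadd (qmul a q) b = qmul r d.
Proof.
rewrite /= qmul0r qadd0r; case: eqP => // /eqP nz_d [<-].
by rewrite qdivrK.
Qed.

Lemma flt_map_conj a :
  a != qzero R ->
  flt_map a (qzero R) (qzero R) a =1 omap (fun q => qmul (qmul a q) (qinv a)).
Proof. by move=> nz_a [q|] /=; rewrite ?eqxx // qmul0r qadd0r qaddr0 (negbTE nz_a). Qed.

End FractionalLinear.

Theorem mainTheorem9 (R : realType) (T : hatH R -> hatH R) :
  is_flt T ->
  ((T (Some (qzero R)) = Some (qzero R) /\ T (Some (qone R)) = Some (qone R)
    /\ T None = None)
   <-> exists a : quat R, a <> qzero R /\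
         forall x : hatH R, T x = omap (fun q => qmul (qmul a q) (qinv a)) x).
Proof.
case=> a [b [c [d [_ T_flt]]]]; split.
- rewrite !T_flt => -[T0 [T1]] /eqP; rewrite flt_map_None_eq => /eqP c0.
  subst c; move: T0 T1.
  move=> /flt_map_affine_Some [nz_d]; rewrite qmulr0 qadd0r qmul0r => b0; subst b.
  move=> /flt_map_affine_Some [_]; rewrite qmulr1 qaddr0 qmul1r => ad; subst a.
  by exists d; split=> [|x]; [apply/eqP | rewrite T_flt flt_map_conj].
- case=> e [/eqP nz_e T_conj].
  by rewrite !T_conj /= qmulr0 qmul0r qmulr1 qmulV.
Qed.
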